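(* Let $p$ be an odd prime and $\chi$ a Dirichlet character with odd conductor $f$. Define $c_n=\sum_{i=0}^n\binom ni(-1)^{n-i}\epsilon_{i,\chi}$ for $n\ge0$. Then $|c_n|_p\le|p^n|_p$ for all $n\geq0$.
   Context: $|\cdot|_p$ is the $p$-adic absolute value with $|p|_p=p^{-1}$ (extended to $\overline{\mathbb Q}_p$). For a primitive Dirichlet character $\psi$ of odd conductor $f_\psi$, $E_{n,\psi}$ is defined by $2\sum_{a=1}^{f_\psi}\frac{(-1)^a\psi(a)e^{at}}{e^{f_\psi t}+1}=\sum_{n\ge0}E_{n,\psi}\frac{t^n}{n!}$. Let $\omega$ be the Teichmüller character mod $p$. For $n\ge0$, $\chi_n$ is the primitive Dirichlet character associated with $a\mapsto\chi(a)\omega^{-n}(a)$ on $(\mathbb Z/\mathrm{lcm}(f,p)\mathbb Z)^\times$, and $\epsilon_{n,\chi}=(1-\chi_n(p)p^n)E_{n,\chi_n}$. *)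

From HB Require Import structures.
From mathcomp Require Import all_boot all_order all_algebra.
Set Implicit Arguments. Unset Strict Implicit. Unset Printing Implicit Defensive.
Import Order.TTheory GRing.Theory Num.Theory.
Local Open Scope ring_scope.

Section Defs.
Variables (R : realFieldType) (K : fieldType).

(* v is an absolute value on K extending the p-adic absolute value |.|_p
   of Q (normalised by |p|_p = p^-1); e.g. K = Qbar_p or C_p. *)
Definition padic_abs (p : nat) (v : K -> R) : Prop :=
  [/\ forall x, 0 <= v x,
      forall x, (v x == 0) = (x == 0),
      forall x y, v (x * y) = v x * v y,
      forall x y, v (x + y) <= Num.max (v x) (v y)
    & v p%:R = (p%:R)^-1].

Definition dirichlet_char (m : nat) (chi : nat -> K) : Prop :=
  [/\ (0 < m)%N,
      forall a, chi (a + m)%N = chi a,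
      forall a b, chi (a * b)%N = chi a * chi b,
      chi 1%N = 1
    & forall a, (chi a == 0) = ~~ coprime a m].

Definition primitive_char (f : nat) (chi : nat -> K) : Prop :=
  dirichlet_char f chi /\
  forall d : nat, (d %| f)%N -> (d < f)%N ->
    exists a b, [/\ coprime a f, coprime b f, (a = b %[mod d])%N & chi a != chi b].

Definition teichmuller (p : nat) (v : K -> R) (omega : nat -> K) : Prop :=
  dirichlet_char p omega /\
  forall a, ~~ (p %| a)%N -> v (omega a - a%:R) < 1.

(* Generalized Euler numbers E_{n,psi} for psi of (odd) conductor f, defined by
   2 sum_{a=1}^f (-1)^a psi(a) e^{at}/(e^{ft}+1) = sum_n E_{n,psi} t^n/n!.
   Comparing coefficients of t^n/n! in
   (e^{ft}+1) * sum_n E_n t^n/n! = 2 sum_{a=1}^f (-1)^a psi(a) e^{at}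
   gives  2 E_n + sum_{k<n} C(n,k) f^(n-k) E_k = 2 sum_a (-1)^a psi(a) a^n,
   which determines the E_n recursively; gen_euler_list n = [:: E_0; ...; E_n]. *)
Definition euler_rhs (f : nat) (psi : nat -> K) (n : nat) : K :=
  \sum_(1 <= a < f.+1) (-1) ^+ a * psi a * (a%:R ^+ n).

Fixpoint gen_euler_list (f : nat) (psi : nat -> K) (n : nat) : seq K :=
  match n with
  | 0 => [:: euler_rhs f psi 0]
  | m.+1 =>
      let s := gen_euler_list f psi m in
      rcons s (euler_rhs f psi m.+1 -
               2^-1 * \sum_(k < m.+1) 'C(m.+1, k)%:R * f%:R ^+ (m.+1 - k) * s`_k)
  end.

Definition gen_euler (f : nat) (psi : nat -> K) (n : nat) : K :=
  (gen_euler_list f psi n)`_n.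

(* epsilon_{n,chi} = (1 - chi_n(p) p^n) E_{n,chi_n}, where chi_n (of conductor fn)
   is the primitive character attached to chi * omega^{-n} *)
Definition eps_char (p fn : nat) (chin : nat -> K) (n : nat) : K :=
  (1 - chin p * p%:R ^+ n) * gen_euler fn chin n.

End Defs.

From HB Require Import structures.
From mathcomp Require Import all_boot all_order all_algebra cyclic.
From mathcomp Require Import ring zify.
Set Implicit Arguments. Unset Strict Implicit. Unset Printing Implicit Defensive.
Import Order.TTheory GRing.Theory Num.Theory.
Local Open Scope ring_scope.

(* Let [F = p * lcm(f, p) * p^n].  Comparing exponential generating functions
   gives a distribution relation: for every odd multiple [G] of the conductor of
   [psi], [E_{k,psi}] is the binomial convolution of the power sums
   [S_j(G, psi) = sum_(a <= G) (-1)^a psi(a) a^j] with [G^l E_l], where [E_l] are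
   the Euler numbers of [2 / (e^t + 1)].  Removing the Euler factor at [p] turns
   these into power sums over [a] prime to [p], so that, all numbers involved
   being [p]-integral because [p] is odd, [eps_{i,chi} = S_i(F, chi_i) + O(F)]
   with [chi_i] extended by zero at multiples of [p].  Away from [p], [chi_i]
   agrees with [chi omega^-i] (by primitivity of [chi], also where [chi]
   vanishes), so the binomial sum of the [S_i(F, chi_i)] is
   [sum_a (-1)^a chi(a) (omega(a)^-1 a - 1)^n], and every term is divisible by
   [p^n] because [omega(a)] is congruent to [a] modulo [p]. *)

Lemma mul_bin_bin n i j : (i + j <= n)%N ->
  ('C(n, i + j) * 'C(i + j, i) = 'C(n, i) * 'C(n - i, j))%N.
Proof.
move=> le_ijn; have le_in : (i <= n)%N by lia.
have le_j : (j <= n - i)%N by lia.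
have pos : (0 < i`! * j`! * (n - i - j)`!)%N by rewrite !muln_gt0 !fact_gt0.
apply/eqP; rewrite -(eqn_pmul2r pos); apply/eqP.
have e_ij := bin_fact (leq_addr j i); rewrite addKn in e_ij.
have e_n := bin_fact le_ijn; rewrite subnDA in e_n.
have e_ni := bin_fact le_j.
transitivity ('C(n, i + j) * ('C(i + j, i) * (i`! * j`!) * (n - i - j)`!))%N; first ring.
rewrite e_ij e_n -(bin_fact le_in) -e_ni; ring.
Qed.

Lemma sum_triangle (R : nmodType) (F : nat -> nat -> R) n :
  \sum_(k < n.+1) \sum_(i < k.+1) F k i =
  \sum_(i < n.+1) \sum_(j < (n - i).+1) F (i + j)%N i.
Proof.
elim: n => [|n IH]; first by rewrite !big_ord1.
rewrite big_ord_recr /= IH [RHS]big_ord_recr /= subnn big_ord1 addn0.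
rewrite [\sum_(i < n.+2) _]big_ord_recr /= addrA; congr (_ + _).
rewrite -big_split /=; apply: eq_bigr => i _ /=.
have le_in : (i <= n)%N by rewrite -ltnS.
by rewrite subSn // [RHS]big_ord_recr /= addnS subnKC.
Qed.

Lemma periodic_addM (T : Type) (h : nat -> T) g :
  (forall a, h (a + g)%N = h a) -> forall a j, h (a + g * j)%N = h a.
Proof.
move=> hper a; elim=> [|j IH]; first by rewrite muln0 addn0.
by rewrite mulnS addnCA addnC hper IH.
Qed.

Lemma sum_nat_blocks (V : nmodType) g m (h : nat -> V) :
  \sum_(1 <= a < (g * m).+1) h a = \sum_(j < m) \sum_(1 <= b < g.+1) h (b + g * j)%N.
Proof.
elim: m => [|m IH]; first by rewrite muln0 big_ord0 big_geq.
rewrite big_ord_recr /= -IH (@big_cat_nat _ _ _ (g * m).+1) //=; last first.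
  by rewrite ltnS leq_mul2l leqnSn orbT.
rewrite -[(g * m).+1]add1n big_addn; congr (_ + _).
by rewrite mulnS -addSn addnK.
Qed.

Lemma signr_oddM (R : pzRingType) g j : odd g -> (-1 : R) ^+ (g * j) = (-1) ^+ j.
Proof. by move=> odd_g; rewrite exprM -[(-1) ^+ g]signr_odd odd_g expr1. Qed.

Lemma sum_alt_telescope (R : comPzRingType) (y : nat -> R) m :
  \sum_(j < m) (-1) ^+ j * (y j.+1 + y j) = y 0%N - (-1) ^+ m * y m.
Proof.
elim: m => [|m IH]; first by rewrite big_ord0 expr0 mul1r subrr.
by rewrite big_ord_recr /= IH exprS; ring.
Qed.

Lemma odd_dvd d n : (d %| n)%N -> odd n -> odd d.
Proof. by case/dvdnP=> k ->; rewrite oddM => /andP[]. Qed.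

Lemma fermat_divn_eq p m : prime p -> ~~ (p %| m)%N ->
  (m ^ p.-1 = m ^ p.-1 %/ p * p + 1)%N.
Proof.
move=> p_pr p_ndvd_m; rewrite {1}(divn_eq (m ^ p.-1) p); congr (_ + _)%N.
have m_cop_p : coprime m p by rewrite coprime_sym prime_coprime.
by rewrite -totient_prime // (Euler_exp_totient m_cop_p) modn_small ?prime_gt1.
Qed.

Lemma eq_modn_dvd d m x y : (d %| m)%N -> x = y %[mod m] -> x = y %[mod d].
Proof. by move=> d_dvd_m e_xy; rewrite -(modn_dvdm x d_dvd_m) e_xy modn_dvdm. Qed.

Lemma coprime_lcm_prime a f p : prime p -> coprime a f -> ~~ (p %| a)%N ->
  coprime a (lcmn f p).
Proof.
move=> p_pr a_cop_f p_ndvd_a; apply: (coprime_dvdr (n := f * p)).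
  by rewrite dvdn_lcm dvdn_mulr ?dvdn_mull.
by rewrite coprimeMr a_cop_f coprime_sym prime_coprime.
Qed.

Section ExponentialConvolution.
Variable R : comPzRingType.
Implicit Types (A B C : nat -> R) (x y : R).

(* Coefficients of the product of the exponential generating functions of [A] and [B]. *)
Definition econv A B n : R := \sum_(k < n.+1) 'C(n, k)%:R * A k * B (n - k)%N.

Definition powseq x n : R := x ^+ n.

Lemma eq_econvl A A' B n : A =1 A' -> econv A B n = econv A' B n.
Proof. by move=> eA; apply: eq_bigr => k _; rewrite eA. Qed.

Lemma eq_econvr A B B' n : B =1 B' -> econv A B n = econv A B' n.
Proof. by move=> eB; apply: eq_bigr => k _; rewrite eB. Qed.

Lemma econvC A B n : econv A B n = econv B A n.
Proof.
rewrite /econv (reindex_inj rev_ord_inj) /=; apply: eq_bigr => k _.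
have le_kn : (k <= n)%N by rewrite -ltnS.
rewrite subSS subKn // bin_sub //; ring.
Qed.

Lemma econvA A B C n : econv (econv A B) C n = econv A (econv B C) n.
Proof.
rewrite /econv; under eq_bigr => k _ do rewrite mulr_sumr mulr_suml.
rewrite (sum_triangle (fun k i =>
  'C(n, k)%:R * ('C(k, i)%:R * A i * B (k - i)%N) * C (n - k)%N)).
apply: eq_bigr => i _; rewrite mulr_sumr.
apply: eq_bigr => j _.
have le_ijn : (i + j <= n)%N by have := ltn_ord i; have := ltn_ord j; lia.
have := congr1 (GRing.natmul (1 : R)) (mul_bin_bin le_ijn); rewrite !natrM => e.
rewrite addKn subnDA; transitivity
  ('C(n, i + j)%:R * 'C(i + j, i)%:R * (A i * B j * C (n - i - j)%N)); first ring.
rewrite e; ring.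
Qed.

Lemma econvDr A B C n : econv A (fun k => B k + C k) n = econv A B n + econv A C n.
Proof. by rewrite /econv -big_split; apply: eq_bigr => k _ /=; ring. Qed.

Lemma econvZl x A B n : econv (fun k => x * A k) B n = x * econv A B n.
Proof. by rewrite /econv mulr_sumr; apply: eq_bigr => k _; ring. Qed.

Lemma econvZr x A B n : econv A (fun k => x * B k) n = x * econv A B n.
Proof. by rewrite econvC econvZl econvC. Qed.

Lemma econv_suml (I : Type) (r : seq I) (c : I -> R) (F : I -> nat -> R) B n :
  econv (fun k => \sum_(j <- r) c j * F j k) B n = \sum_(j <- r) c j * econv (F j) B n.
Proof.
rewrite /econv; under eq_bigr => k _ do rewrite mulr_sumr mulr_suml.
rewrite exchange_big; apply: eq_bigr => j _; rewrite mulr_sumr.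
by apply: eq_bigr => k _; ring.
Qed.

Lemma econv_sumr (I : Type) (r : seq I) (c : I -> R) (F : I -> nat -> R) A n :
  econv A (fun k => \sum_(j <- r) c j * F j k) n = \sum_(j <- r) c j * econv A (F j) n.
Proof. by rewrite econvC econv_suml; apply: eq_bigr => j _; rewrite econvC. Qed.

Lemma econv_powseq x y n : econv (powseq x) (powseq y) n = powseq (x + y) n.
Proof. by rewrite /powseq addrC exprDn; apply: eq_bigr => k _; rewrite -mulr_natl; ring. Qed.

Lemma econv_powseq0 A n : econv A (powseq 0) n = A n.
Proof.
rewrite /econv big_ord_recr /= subnn /powseq expr0 binn mul1r mulr1 big1 ?add0r //.
by move=> k _; rewrite expr0n subn_eq0 leqNgt ltn_ord mulr0.
Qed.

Lemma econv_powZ x A B n :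
  econv (fun k => x ^+ k * A k) (fun k => x ^+ k * B k) n = x ^+ n * econv A B n.
Proof.
rewrite /econv mulr_sumr; apply: eq_bigr => k _.
have le_kn : (k <= n)%N by rewrite -ltnS.
have -> : x ^+ n = x ^+ k * x ^+ (n - k) by rewrite -exprD subnKC.
ring.
Qed.

End ExponentialConvolution.

Lemma econv_cancel (R : idomainType) (A B D : nat -> R) :
  D 0%N != 0 -> (forall n, econv A D n = econv B D n) -> A =1 B.
Proof.
move=> D0 eAB; elim/ltn_ind=> n IH; move: (eAB n).
rewrite /econv !big_ord_recr /= subnn binn !mul1r.
rewrite (eq_bigr (fun k : 'I_n => 'C(n, k)%:R * B k * D (n - k)%N)) => [|k _].
  by move/addrI/mulIf; apply.
by rewrite IH.
Qed.

Section GeneralizedEulerNumbers.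
Variable K : fieldType.
Implicit Types (psi : nat -> K) (f g m : nat).

(* The coefficients of [e^{xt} + 1]. *)
Definition euler_denom (x : K) n : K := powseq x n + powseq 0 n.

Lemma size_gen_euler_list f psi n : size (gen_euler_list f psi n) = n.+1.
Proof. by elim: n => [|n IH] //=; rewrite size_rcons IH. Qed.

Lemma nth_gen_euler_list f psi n k : (k <= n)%N ->
  (gen_euler_list f psi n)`_k = gen_euler f psi k.
Proof.
elim: n => [|n IH]; first by rewrite leqn0 => /eqP ->.
rewrite leq_eqVlt => /orP[/eqP -> //|lt_kn].
by rewrite /= nth_rcons size_gen_euler_list lt_kn IH.
Qed.

Lemma gen_eulerS f psi n :
  gen_euler f psi n.+1 = euler_rhs f psi n.+1 -
    2^-1 * \sum_(k < n.+1) 'C(n.+1, k)%:R * f%:R ^+ (n.+1 - k) * gen_euler f psi k.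
Proof.
rewrite /gen_euler /= nth_rcons size_gen_euler_list ltnn eqxx.
congr (_ - 2^-1 * _); apply: eq_bigr => k _.
by rewrite nth_gen_euler_list // -ltnS.
Qed.

Lemma euler_denomE (x : K) n : euler_denom x n = x ^+ n * euler_denom 1 n.
Proof. by rewrite /euler_denom /powseq expr1n; case: n => [|n]; rewrite ?expr0n /=; ring. Qed.

(* The coefficients of [\sum_(j < m) (-1)^j e^{g j t}]. *)
Definition alt_exp_sum g m n : K := \sum_(j < m) (-1) ^+ j * powseq (g * j)%:R n.

Lemma euler_rhs_mul g m psi n : odd g -> (forall a, psi (a + g)%N = psi a) ->
  euler_rhs (g * m) psi n = econv (alt_exp_sum g m) (euler_rhs g psi) n.
Proof.
move=> odd_g psi_per; rewrite /alt_exp_sum econv_suml /euler_rhs sum_nat_blocks.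
apply: eq_bigr => j _; rewrite (@eq_econvr _ _ _ (fun k =>
  \sum_(1 <= a < g.+1) ((-1) ^+ a * psi a) * powseq a%:R k)) // econv_sumr mulr_sumr.
apply: eq_bigr => a _; rewrite econv_powseq /powseq exprD signr_oddM //.
by rewrite (periodic_addM psi_per) natrD addrC; ring.
Qed.

Lemma euler_denom_mul g m n : odd m ->
  euler_denom (g * m)%:R n = econv (alt_exp_sum g m) (euler_denom g%:R) n.
Proof.
move=> odd_m; rewrite /alt_exp_sum econv_suml (eq_bigr (fun j : 'I_m =>
  (-1) ^+ j * (powseq (g * j.+1)%:R n + powseq (g * j)%:R n))) => [|j _]; last first.
  by rewrite econvDr !econv_powseq addr0 -natrD mulnS addnC.
rewrite (sum_alt_telescope (fun j => powseq (g * j)%:R n)) muln0.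
by rewrite -signr_odd odd_m /euler_denom; ring.
Qed.

Hypothesis two_neq0 : (2 : K) != 0.

Lemma econv_gen_euler f psi n :
  econv (gen_euler f psi) (euler_denom f%:R) n = 2 * euler_rhs f psi n.
Proof.
rewrite /econv /euler_denom /powseq big_ord_recr /= subnn !expr0 binn mul1r.
case: n => [|n]; first by rewrite big_ord0 add0r /gen_euler /=; ring.
under eq_bigr => k _ do rewrite expr0n subn_eq0 leqNgt ltn_ord addr0.
rewrite gen_eulerS; set S := \sum_(k < n.+1) _.
have -> : S = \sum_(k < n.+1) 'C(n.+1, k)%:R * f%:R ^+ (n.+1 - k) * gen_euler f psi k.
  by apply: eq_bigr => k _; ring.
by field.
Qed.

Lemma econv_gen_euler_mul g m psi n :
  odd g -> odd m -> (forall a, psi (a + g)%N = psi a) ->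
  econv (gen_euler g psi) (euler_denom (g * m)%:R) n = 2 * euler_rhs (g * m) psi n.
Proof.
move=> odd_g odd_m psi_per; rewrite (euler_rhs_mul m n odd_g psi_per).
rewrite (eq_econvr _ _ (fun k => euler_denom_mul g k odd_m)).
rewrite (eq_econvr _ _ (fun k => econvC _ _ k)) -econvA.
by rewrite (eq_econvl _ _ (econv_gen_euler g psi)) econvZl econvC.
Qed.

(* [gen_euler 1 (fun _ => -1)] generates [2 e^t / (e^t + 1)], so [euler_num]
   generates [2 / (e^t + 1)]. *)
Definition euler_num n : K := econv (powseq (-1)) (gen_euler 1 (fun _ => -1)) n.

Lemma euler_num0 : euler_num 0 = 1.
Proof.
rewrite /euler_num /econv big_ord1 /gen_euler /= /euler_rhs big_nat1 /powseq.
by rewrite bin0 !expr0 expr1 !mulr1 mul1r mulrNN mulr1.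
Qed.

Lemma econv_euler_num x n :
  econv (fun k => x ^+ k * euler_num k) (euler_denom x) n = 2 * powseq 0 n.
Proof.
rewrite (eq_econvr _ _ (euler_denomE x)) econv_powZ /euler_num econvA.
rewrite (eq_econvr _ _ (econv_gen_euler 1 (fun _ => -1))) econvZr.
rewrite (eq_econvr _ _ (_ : _ =1 powseq 1)); last first.
  by move=> k; rewrite /euler_rhs big_nat1 /powseq; ring.
by rewrite econv_powseq addNr /powseq mulrCA -exprMn mulr0.
Qed.

(* By [gen_euler_expansion], this computes [E_{n,psi}] from the power sums up to
   any odd multiple [G] of the conductor of [psi]. *)
Definition euler_expansion G psi n : K :=
  econv (euler_rhs G psi) (fun k => G%:R ^+ k * euler_num k) n.

Lemma econv_euler_expansion G psi n :
  econv (euler_expansion G psi) (euler_denom G%:R) n = 2 * euler_rhs G psi n.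
Proof.
rewrite /euler_expansion econvA (eq_econvr _ _ (econv_euler_num G%:R)).
by rewrite econvZr econv_powseq0.
Qed.

Lemma gen_euler_expansion g m psi :
  odd g -> odd m -> (forall a, psi (a + g)%N = psi a) ->
  gen_euler g psi =1 euler_expansion (g * m) psi.
Proof.
move=> odd_g odd_m psi_per; apply: (econv_cancel (D := euler_denom (g * m)%:R)).
  by rewrite /euler_denom /powseq !expr0.
by move=> n; rewrite econv_gen_euler_mul // econv_euler_expansion.
Qed.

Definition pdeplete p psi a : K := if (p %| a)%N then 0 else psi a.

Lemma euler_rhs_pdeplete p G psi k :
  odd p -> (1 < p)%N -> (forall a b, psi (a * b)%N = psi a * psi b) ->
  euler_rhs (p * G) (pdeplete p psi) k =
  euler_rhs (p * G) psi k - psi p * p%:R ^+ k * euler_rhs G psi k.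
Proof.
move=> odd_p p_gt1 psiM; rewrite /euler_rhs !sum_nat_blocks.
rewrite -[G in \sum_(1 <= a < G.+1) _]mul1n sum_nat_blocks mulr_sumr -sumrB.
apply: eq_bigr => j _; rewrite big_nat1 !big_nat_recr /= ?(ltnW p_gt1) // /pdeplete.
rewrite dvdn_addl ?dvdn_mulr // dvdnn mulr0 mul0r addr0 mul1n add1n -mulnS.
rewrite signr_oddM // psiM natrM exprMn -addrA [X in _ + X](_ : _ = 0) ?addr0;
  last by ring.
apply: eq_big_nat => b /andP[b_gt0 b_lt_p].
by rewrite dvdn_addl ?dvdn_mulr // gtnNdvd.
Qed.

Lemma eps_char_expansion p g m psi i :
  odd p -> (1 < p)%N -> odd g -> odd m ->
  (forall a, psi (a + g)%N = psi a) -> (forall a b, psi (a * b)%N = psi a * psi b) ->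
  eps_char p g psi i = euler_expansion (p * (g * m)) (pdeplete p psi) i.
Proof.
move=> odd_p p_gt1 odd_g odd_m psi_per psiM.
have odd_pm : odd (p * m) by rewrite oddM odd_p.
rewrite /eps_char mulrBl mul1r {1}(gen_euler_expansion odd_g odd_pm psi_per).
rewrite (gen_euler_expansion odd_g odd_m psi_per) mulnCA.
rewrite /euler_expansion /econv mulr_sumr -sumrB; apply: eq_bigr => k _.
have le_ki : (k <= i)%N by rewrite -ltnS.
have -> : p%:R ^+ i = p%:R ^+ k * p%:R ^+ (i - k) :> K by rewrite -exprD subnKC.
by rewrite euler_rhs_pdeplete // natrM exprMn; ring.
Qed.

End GeneralizedEulerNumbers.

Arguments euler_num {K} n.

Section PadicAbsoluteValue.
Variables (R : realFieldType) (K : fieldType) (p : nat) (v : K -> R).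
Hypothesis hv : padic_abs p v.

Lemma abs_ge0 x : (0 : R) <= v x. Proof. by case: hv. Qed.
Lemma abs_eq0 x : (v x == 0) = (x == 0). Proof. by case: hv. Qed.
Lemma absM x y : v (x * y) = v x * v y. Proof. by case: hv. Qed.
Lemma abs_le_max x y : v (x + y) <= Num.max (v x) (v y). Proof. by case: hv. Qed.
Lemma abs_natrp : v p%:R = p%:R^-1. Proof. by case: hv. Qed.

Lemma abs0 : v 0 = 0.
Proof. by apply/eqP; rewrite abs_eq0. Qed.

Lemma abs1 : v 1 = 1.
Proof.
have v1_neq0 : v 1 != 0 by rewrite abs_eq0 oner_eq0.
by apply: (mulfI v1_neq0); rewrite -absM !mulr1.
Qed.

Lemma absX x n : v (x ^+ n) = v x ^+ n.
Proof. by elim: n => [|n IH]; rewrite ?abs1 // !exprS absM IH. Qed.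

Lemma absN1 : v (-1) = 1.
Proof.
apply/eqP; rewrite -(@pexpr_eq1 _ _ 2) ?abs_ge0 //.
by rewrite -absX sqrrN expr1n abs1.
Qed.

Lemma absN x : v (- x) = v x.
Proof. by rewrite -mulN1r absM absN1 mul1r. Qed.

Lemma absV x : v x^-1 = (v x)^-1.
Proof.
have [->|x_neq0] := eqVneq x 0; first by rewrite invr0 abs0 invr0.
by rewrite -[RHS]mulr1 -abs1 -(mulfV x_neq0) absM mulKf // abs_eq0.
Qed.

Lemma absD_le x y (B : R) : v x <= B -> v y <= B -> v (x + y) <= B.
Proof. by move=> vx vy; apply: le_trans (abs_le_max x y) _; rewrite ge_max vx vy. Qed.

Lemma abs_sum_le (I : Type) (r : seq I) (P : pred I) (F : I -> K) (B : R) :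
  (0 : R) <= B -> (forall i, P i -> v (F i) <= B) -> v (\sum_(i <- r | P i) F i) <= B.
Proof. by move=> B_ge0 vF; elim/big_ind: _ => // [|x y]; [rewrite abs0 | exact: absD_le]. Qed.

Lemma absM_le1l x y (B : R) : v x <= 1 -> v y <= B -> v (x * y) <= B.
Proof.
move=> vx vy; rewrite absM; apply: le_trans vy.
by rewrite ler_piMl ?abs_ge0.
Qed.

Lemma abs_natr_le1 n : v n%:R <= 1.
Proof.
elim: n => [|n IH]; first by rewrite abs0 ler01.
by rewrite -addn1 natrD; apply: absD_le; rewrite ?abs1.
Qed.

Lemma absX_le1 x n : v x <= 1 -> v (x ^+ n) <= 1.
Proof. by move=> vx; rewrite absX exprn_ile1 ?abs_ge0. Qed.

Lemma abs_signed_binomial_sum_le n (x : 'I_n.+1 -> K) (B : R) :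
  (0 : R) <= B -> (forall i, v (x i) <= B) ->
  v (\sum_(i < n.+1) 'C(n, i)%:R * (-1) ^+ (n - i) * x i) <= B.
Proof.
move=> B_ge0 vx; apply: abs_sum_le => // i _; rewrite -mulrA.
apply: absM_le1l; first exact: abs_natr_le1.
by apply: absM_le1l; first by rewrite absX absN1 expr1n.
Qed.

Lemma absD_eq x y : v y < v x -> v (x + y) = v x.
Proof.
move=> vyx; apply/le_anti; rewrite (le_trans (abs_le_max x y)) ?ge_max ?lexx ?(ltW vyx) //=.
have := abs_le_max (x + y) (- y); rewrite addrK absN le_max => /orP[//|vx_le].
by have := lt_le_trans vyx vx_le; rewrite ltxx.
Qed.

Lemma abs_natr_dvd d m : (d %| m)%N -> v m%:R <= v d%:R.
Proof. by case/dvdnP=> k ->; rewrite natrM absM ler_piMl ?abs_ge0 ?abs_natr_le1. Qed.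

Lemma abs_subX_le x y n : v x <= 1 -> v y <= 1 -> v (x ^+ n - y ^+ n) <= v (x - y).
Proof.
move=> vx vy; rewrite subrXX mulrC; apply: absM_le1l => //.
apply: abs_sum_le => [|i _]; first exact: ler01.
by rewrite absM mulr_ile1 ?abs_ge0 ?absX_le1.
Qed.

Lemma abs_subX_eq x y n : v x <= 1 -> v y = 1 -> v (x - y) < 1 -> v n%:R = 1 ->
  v (x ^+ n - y ^+ n) = v (x - y).
Proof.
move=> vx vy vxy vn; have vy_le1 : v y <= 1 by rewrite vy.
rewrite subrXX absM; set S := \sum_(i < n) _.
suff -> : v S = 1 by rewrite mulr1.
have -> : S = n%:R * y ^+ n.-1 +
    \sum_(i < n) (x ^+ (n.-1 - i) - y ^+ (n.-1 - i)) * y ^+ i.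
  rewrite (_ : n%:R * _ = \sum_(i < n) y ^+ (n.-1 - i) * y ^+ i).
    by rewrite -big_split; apply: eq_bigr => i _ /=; rewrite mulrBl addrC subrK.
  rewrite mulr_natl -[n in _ *+ n]card_ord -sumr_const; apply: eq_bigr => i _.
  by rewrite -exprD subnK //; have := ltn_ord i; lia.
have vny : v (n%:R * y ^+ n.-1) = 1 by rewrite absM absX vy expr1n vn mulr1.
rewrite absD_eq vny //; apply: le_lt_trans vxy; apply: abs_sum_le => [|i _].
  exact: abs_ge0.
by rewrite mulrC absM_le1l ?absX_le1 ?abs_subX_le.
Qed.

Hypothesis p_pr : prime p.

Lemma invr_natp_lt1 : p%:R^-1 < 1 :> R.
Proof. by rewrite invf_lt1 ?ltr1n ?prime_gt1 // ltr0n prime_gt0. Qed.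

Lemma abs_natr_eq1 m : ~~ (p %| m)%N -> v m%:R = 1.
Proof.
move=> p_ndvd_m; have p1_gt0 : (0 < p.-1)%N by have := prime_gt1 p_pr; lia.
apply/eqP; rewrite -(pexpr_eq1 p1_gt0) ?abs_ge0 // -absX -natrX.
rewrite (fermat_divn_eq p_pr p_ndvd_m) natrD addrC absD_eq ?abs1 //.
rewrite (le_lt_trans (abs_natr_dvd (dvdn_mull _ (dvdnn p)))) //.
by rewrite abs_natrp invr_natp_lt1.
Qed.

Hypothesis p_odd : odd p.
Implicit Types (psi : nat -> K).

Lemma abs_euler_rhs_le1 G psi k : (forall a, v (psi a) <= 1) -> v (euler_rhs G psi k) <= 1.
Proof.
move=> psi_le1; apply: abs_sum_le => [|a _]; first exact: ler01.
rewrite -mulrA; apply: absM_le1l; first by rewrite absX absN1 expr1n.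
by apply: absM_le1l; rewrite ?absX_le1 ?abs_natr_le1.
Qed.

Lemma abs_natr2 : v 2 = 1.
Proof.
have p_gt2 : (2 < p)%N.
  by rewrite ltn_neqAle prime_gt1 // andbT; apply: contraTneq p_odd => <-.
by rewrite abs_natr_eq1 // gtnNdvd.
Qed.

Lemma natr2_neq0 : (2 : K) != 0.
Proof. by rewrite -abs_eq0 abs_natr2 oner_eq0. Qed.

Lemma abs_gen_euler_le1 G psi n : (forall a, v (psi a) <= 1) -> v (gen_euler G psi n) <= 1.
Proof.
move=> psi_le1; elim/ltn_ind: n => -[_|n IH]; first exact: abs_euler_rhs_le1.
rewrite gen_eulerS; apply: absD_le; first exact: abs_euler_rhs_le1.
rewrite absN; apply: absM_le1l; first by rewrite absV abs_natr2 invr1.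
apply: abs_sum_le => [|k _]; first exact: ler01.
rewrite -mulrA; apply: absM_le1l; first exact: abs_natr_le1.
by apply: absM_le1l; [rewrite absX_le1 ?abs_natr_le1 | apply: IH].
Qed.

Lemma abs_euler_num_le1 n : v (euler_num n) <= 1.
Proof.
apply: abs_sum_le => [|k _]; first exact: ler01.
rewrite -mulrA; apply: absM_le1l; first exact: abs_natr_le1.
apply: absM_le1l; first by rewrite absX absN1 expr1n.
by apply: abs_gen_euler_le1 => a; rewrite absN1.
Qed.

Lemma abs_euler_expansion_sub_rhs G psi n : (forall a, v (psi a) <= 1) ->
  v (euler_expansion G psi n - euler_rhs G psi n) <= v G%:R.
Proof.
move=> psi_le1; rewrite /euler_expansion /econv big_ord_recr /= subnn expr0 euler_num0.
rewrite binn !mulr1 mul1r addrK; apply: abs_sum_le => [|k _]; first exact: abs_ge0.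
rewrite -mulrA; apply: absM_le1l; first exact: abs_natr_le1.
apply: absM_le1l; first exact: abs_euler_rhs_le1.
rewrite mulrC; apply: absM_le1l; first exact: abs_euler_num_le1.
have -> : (n - k = (n - k.+1).+1)%N by have := ltn_ord k; lia.
by rewrite absX exprS ler_piMr ?abs_ge0 ?exprn_ile1 ?abs_ge0 ?abs_natr_le1.
Qed.

End PadicAbsoluteValue.

Section DirichletCharacters.
Variables (K : fieldType) (m : nat) (chi : nat -> K).
Hypothesis chi_dc : dirichlet_char m chi.

Lemma dirichlet_char_mod a b : a = b %[mod m] -> chi a = chi b.
Proof.
case: chi_dc => _ chi_per _ _ _ e_ab.
have chi_mod c : chi c = chi (c %% m).
  by rewrite {1}(divn_eq c m) addnC mulnC (periodic_addM chi_per).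
by rewrite chi_mod e_ab -chi_mod.
Qed.

Lemma dirichlet_charX a k : chi (a ^ k) = chi a ^+ k.
Proof.
case: chi_dc => _ _ chiM chi1 _.
by elim: k => [|k IH]; rewrite ?expn0 ?expr0 // expnS exprS chiM IH.
Qed.

Lemma dirichlet_char_totient a : coprime a m -> chi a ^+ totient m = 1.
Proof.
move=> a_cop; rewrite -dirichlet_charX (dirichlet_char_mod (Euler_exp_totient a_cop)).
by case: chi_dc.
Qed.

Lemma dirichlet_char_eq0 a : ~~ coprime a m -> chi a = 0.
Proof. by case: chi_dc => _ _ _ _ chi_eq0 a_ncop; apply/eqP; rewrite chi_eq0. Qed.

Lemma dirichlet_char_neq0 a : coprime a m -> chi a != 0.
Proof. by case: chi_dc => _ _ _ _ ->; rewrite negbK. Qed.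

Variables (R : realFieldType) (p : nat) (v : K -> R).
Hypothesis hv : padic_abs p v.

Lemma abs_dirichlet_char a : coprime a m -> v (chi a) = 1.
Proof.
move=> a_cop; have tot_gt0 : (0 < totient m)%N by rewrite totient_gt0; case: chi_dc.
apply/eqP; rewrite -(pexpr_eq1 tot_gt0) ?(abs_ge0 hv) //.
by rewrite -(absX hv) dirichlet_char_totient // (abs1 hv).
Qed.

Lemma abs_dirichlet_char_le1 a : v (chi a) <= 1.
Proof.
have [a_cop|a_ncop] := boolP (coprime a m); first by rewrite abs_dirichlet_char.
by rewrite dirichlet_char_eq0 // (abs0 hv) ler01.
Qed.

End DirichletCharacters.

(* [omega a] and [a] have [(p-1)]-th powers congruent to [1] modulo [p], and
   raising to the power [p - 1], a unit, does not change their distance. *)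
Lemma abs_teichmuller_sub (R : realFieldType) (K : fieldType) p (v : K -> R) omega a :
  padic_abs p v -> prime p -> teichmuller p v omega -> ~~ (p %| a)%N ->
  v (omega a - a%:R) <= p%:R^-1.
Proof.
move=> hv p_pr [omega_dc omega_near] p_ndvd_a.
have a_cop_p : coprime a p by rewrite coprime_sym prime_coprime.
have p_ndvd_p1 : ~~ (p %| p.-1)%N by rewrite gtnNdvd //; have := prime_gt1 p_pr; lia.
rewrite -(abs_subX_eq hv _ _ (omega_near a p_ndvd_a) (abs_natr_eq1 hv p_pr p_ndvd_p1)).
- rewrite -totient_prime // dirichlet_char_totient // totient_prime // -natrX.
  by rewrite (fermat_divn_eq p_pr p_ndvd_a) natrD opprD addrCA subrr addr0 (absN hv)
    -(abs_natrp hv) (abs_natr_dvd hv) ?dvdn_mull.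
- exact: (abs_dirichlet_char_le1 omega_dc hv).
- exact: (abs_natr_eq1 hv p_pr p_ndvd_a).
Qed.

Section TeichmullerTwist.
Variables (K : fieldType) (p f fn i : nat) (chi omega chin : nat -> K).
Hypotheses (p_pr : prime p) (chi_pr : primitive_char f chi).
Hypotheses (omega_dc : dirichlet_char p omega) (chin_dc : dirichlet_char fn chin).
Hypothesis chin_twist :
  forall a, coprime a (lcmn f p) -> chin a = chi a * (omega a ^+ i)^-1.

Let chi_dc : dirichlet_char f chi. Proof. by case: chi_pr. Qed.

Lemma twist_congr y b : coprime y f -> coprime b f -> ~~ (p %| y)%N -> ~~ (p %| b)%N ->
  y = b %[mod fn] -> y = b %[mod p] -> chi y = chi b.
Proof.
move=> y_cop b_cop p_ndvd_y p_ndvd_b e_fn e_p.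
have := chin_twist (coprime_lcm_prime p_pr y_cop p_ndvd_y).
rewrite (dirichlet_char_mod chin_dc e_fn) (dirichlet_char_mod omega_dc e_p).
rewrite chin_twist ?coprime_lcm_prime // => /mulIf -> //.
by rewrite invr_eq0 expf_neq0 // (dirichlet_char_neq0 omega_dc) // coprime_sym prime_coprime.
Qed.

(* Were [q] prime to [fn], then by the Chinese remainder theorem [chi] would only
   depend on residues modulo [f %/ q], contradicting primitivity. *)
Lemma prime_dvd_twist_conductor q : prime q -> q != p -> (q %| f)%N -> (q %| fn)%N.
Proof.
move=> q_pr q_neq_p q_dvd_f; apply: contraT => q_ndvd_fn.
have f_gt0 : (0 < f)%N by case: chi_dc.
have [f' q_cop_f' def_f] := pfactor_coprime q_pr f_gt0; set e := logn q f in def_f.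
have e_gt0 : (0 < e)%N by rewrite logn_gt0 mem_primes q_pr f_gt0.
have f'_dvd_fq : (f' %| f %/ q)%N.
  by rewrite dvdn_divRL // def_f dvdn_mul // -(prednK e_gt0) expnS dvdn_mulr.
have [a0 [b0 [a0_cop b0_cop e_ab0 chi_ab0]]] :=
  chi_pr.2 _ (dvdn_div q_dvd_f) (ltn_Pdiv (prime_gt1 q_pr) f_gt0).
have [b1 e_b1 p_ndvd_b1] : exists2 b1, b1 = b0 %[mod f] & ~~ (p %| b1)%N.
  have [p_dvd_b0|] := boolP (p %| b0)%N; last by exists b0.
  exists (b0 + f)%N; first exact: modnDr.
  by rewrite dvdn_addr // -prime_coprime // (coprime_dvdl p_dvd_b0 b0_cop).
have b1_cop : coprime b1 f by rewrite -coprime_modl e_b1 coprime_modl.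
have qe_cop : coprime (q ^ e) (f' * (fn * p)).
  rewrite coprime_pexpl // !coprimeMr q_cop_f' !prime_coprime // q_ndvd_fn.
  by rewrite dvdn_prime2.
set y := chinese (q ^ e) (f' * (fn * p)) a0 b1.
have y_b1 d : (d %| f' * (fn * p))%N -> y = b1 %[mod d].
  by move=> d_dvd; apply: eq_modn_dvd d_dvd (chinese_modr qe_cop _ _).
have y_a0 : y = a0 %[mod f].
  apply/eqP; rewrite def_f chinese_remainder 1?coprime_sym ?coprime_pexpl //.
  rewrite (chinese_modl qe_cop) eqxx andbT; apply/eqP.
  rewrite y_b1 ?dvdn_mulr // (eq_modn_dvd (dvdn_trans f'_dvd_fq (dvdn_div q_dvd_f)) e_b1).
  by rewrite (eq_modn_dvd f'_dvd_fq e_ab0).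
have y_cop : coprime y f by rewrite -coprime_modl y_a0 coprime_modl.
have p_ndvd_y : ~~ (p %| y)%N by rewrite /dvdn y_b1 ?dvdn_mull.
suff : chi a0 = chi b0 by move/eqP; rewrite (negbTE chi_ab0).
rewrite -(dirichlet_char_mod chi_dc y_a0) -(dirichlet_char_mod chi_dc e_b1).
apply: twist_congr => //; apply: y_b1; rewrite dvdn_mull //.
  exact: dvdn_mulr.
exact: dvdn_mull.
Qed.

Lemma twist_eq0 a : ~~ (p %| a)%N -> ~~ coprime a f -> chin a = 0.
Proof.
move=> p_ndvd_a a_ncop; apply: (dirichlet_char_eq0 chin_dc).
have f_gt0 : (0 < f)%N by case: chi_dc.
have gcd_gt1 : (1 < gcdn a f)%N.
  by move: a_ncop; rewrite /coprime; have := gcdn_gt0 a f; rewrite f_gt0 orbT; lia.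
set q := pdiv (gcdn a f); have q_pr : prime q := pdiv_prime gcd_gt1.
have q_dvd_a : (q %| a)%N := dvdn_trans (pdiv_dvd _) (dvdn_gcdl _ _).
have q_dvd_f : (q %| f)%N := dvdn_trans (pdiv_dvd _) (dvdn_gcdr _ _).
have q_neq_p : q != p by apply: contraNneq p_ndvd_a => <-.
apply: contraL (prime_dvd_twist_conductor q_pr q_neq_p q_dvd_f) => a_cop.
by rewrite -prime_coprime // (coprime_dvdl q_dvd_a a_cop).
Qed.

Lemma pdeplete_twist a :
  pdeplete p chin a = if (p %| a)%N then 0 else chi a * (omega a ^+ i)^-1.
Proof.
rewrite /pdeplete; case: ifPn => // p_ndvd_a.
have [a_cop|a_ncop] := boolP (coprime a f); first by rewrite chin_twist ?coprime_lcm_prime.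
by rewrite twist_eq0 // (dirichlet_char_eq0 chi_dc) ?mul0r.
Qed.

End TeichmullerTwist.

Lemma sum_binomial_twist_rhs (K : fieldType) p G (chi omega : nat -> K)
    (psi : nat -> nat -> K) n :
  (forall i a, psi i a = if (p %| a)%N then 0 else chi a * (omega a ^+ i)^-1) ->
  \sum_(i < n.+1) 'C(n, i)%:R * (-1) ^+ (n - i) * euler_rhs G (psi i) i =
  \sum_(1 <= a < G.+1)
    (-1) ^+ a * (if (p %| a)%N then 0 else chi a * ((omega a)^-1 * a%:R - 1) ^+ n).
Proof.
move=> psiE; rewrite /euler_rhs; under eq_bigr => i _ do rewrite mulr_sumr.
rewrite exchange_big /=; apply: eq_bigr => a _; under eq_bigr => i _ do rewrite psiE.
case: ifP => _; first by rewrite big1 ?mulr0 // => i _; rewrite !(mulr0, mul0r).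
rewrite addrC exprDn !mulr_sumr; apply: eq_bigr => i _.
rewrite exprMn exprVn -mulr_natl; set w := (omega a ^+ i)^-1; ring.
Qed.

Lemma abs_binomial_twist_rhs_le (R : realFieldType) (K : fieldType) p (v : K -> R)
    (chi omega : nat -> K) (psi : nat -> nat -> K) G n :
  padic_abs p v -> prime p -> teichmuller p v omega -> (forall a, v (chi a) <= 1) ->
  (forall i a, psi i a = if (p %| a)%N then 0 else chi a * (omega a ^+ i)^-1) ->
  v (\sum_(i < n.+1) 'C(n, i)%:R * (-1) ^+ (n - i) * euler_rhs G (psi i) i)
    <= v (p%:R ^+ n).
Proof.
move=> hv p_pr omega_teich chi_le1 psiE; have [omega_dc _] := omega_teich.
rewrite (sum_binomial_twist_rhs _ _ psiE); apply: (abs_sum_le hv) => [|a _].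
  exact: (abs_ge0 hv).
apply: (absM_le1l hv); first by rewrite (absX hv) (absN1 hv) expr1n.
case: ifPn => [_|p_ndvd_a]; first by rewrite (abs0 hv) (abs_ge0 hv).
apply: (absM_le1l hv (chi_le1 a)); rewrite !(absX hv) lerXn2r ?nnegrE ?(abs_ge0 hv) //.
have omega_a : v (omega a) = 1.
  by apply: (abs_dirichlet_char omega_dc hv); rewrite coprime_sym prime_coprime.
have omega_a_neq0 : omega a != 0 by rewrite -(abs_eq0 hv) omega_a oner_eq0.
rewrite -[X in _ - X](mulVf omega_a_neq0) -mulrBr (absM hv) (absV hv) omega_a invr1 mul1r.
rewrite -opprB (absN hv) (abs_natrp hv).
exact: (abs_teichmuller_sub hv p_pr omega_teich p_ndvd_a).
Qed.

Theorem lemma3p4 (R : realFieldType) (K : fieldType) (v : K -> R)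
  (p f : nat) (chi omega : nat -> K) (chin : nat -> nat -> K) (fn : nat -> nat) :
  prime p -> odd p ->
  padic_abs p v ->
  teichmuller p v omega ->
  odd f -> primitive_char f chi ->
  (forall n, [/\ primitive_char (fn n) (chin n),
                 (fn n %| lcmn f p)%N
               & forall a, coprime a (lcmn f p) ->
                   chin n a = chi a * (omega a ^+ n)^-1]) ->
  forall n : nat,
    v (\sum_(i < n.+1) 'C(n, i)%:R * (-1) ^+ (n - i) * eps_char p (fn i) (chin i) i)
      <= v (p%:R ^+ n).
Proof.
move=> p_pr p_odd hv omega_teich f_odd chi_pr chin_twist n.
have [[omega_dc _] [chi_dc _]] := (omega_teich, chi_pr).
have lcm_odd : odd (lcmn f p).
  apply: (@odd_dvd _ (f * p)); last by rewrite oddM f_odd.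
  by rewrite dvdn_lcm dvdn_mulr ?dvdn_mull.
set F := (p * (lcmn f p * p ^ n))%N.
have eps_expansion i :
    eps_char p (fn i) (chin i) i = euler_expansion F (pdeplete p (chin i)) i.
  have [[[_ chin_per chinM _ _] _] fn_dvd _] := chin_twist i.
  have -> : F = (p * (fn i * (lcmn f p %/ fn i * p ^ n)))%N.
    by rewrite /F [(fn i * _)%N]mulnA [(fn i * _)%N]mulnC divnK.
  apply: eps_char_expansion => //; first exact: natr2_neq0 hv p_pr p_odd.
  - exact: prime_gt1.
  - exact: odd_dvd fn_dvd lcm_odd.
  - by rewrite oddM oddX p_odd orbT (odd_dvd (dvdn_div fn_dvd)).
have psi_le1 i a : v (pdeplete p (chin i) a) <= 1.
  have [[chin_dc _] _ _] := chin_twist i; rewrite /pdeplete.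
  by case: ifP => _; [rewrite (abs0 hv) ler01 | exact: (abs_dirichlet_char_le1 chin_dc hv)].
under eq_bigr => i _ do rewrite eps_expansion
  -(subrK (euler_rhs F (pdeplete p (chin i)) i) (euler_expansion _ _ _)) mulrDr.
rewrite big_split /=; apply: (absD_le hv).
  apply: (abs_signed_binomial_sum_le hv) => [|i]; first exact: (abs_ge0 hv).
  apply: le_trans (abs_euler_expansion_sub_rhs hv p_pr p_odd _ _ (psi_le1 i)) _.
  by rewrite -natrX (abs_natr_dvd hv) // dvdn_mull ?dvdn_mull.
apply: (abs_binomial_twist_rhs_le (psi := fun i => pdeplete p (chin i)) F n hv p_pr
  omega_teich (abs_dirichlet_char_le1 chi_dc hv)).
move=> i a; have [[chin_dc _] _ chin_tw] := chin_twist i.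
exact: (pdeplete_twist p_pr chi_pr omega_dc chin_dc chin_tw).
Qed.
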